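(* For every cycle structure $x$ of an element of $S_\infty$ there exists $b\in\mathbb{N}$ such that every metacyclic subgroup $D\le S_\infty$ (finite) contains at most $b$ elements with cycle structure $x$.
   Context: $S_\infty$ is the group of permutations of $\mathbb{N}$ fixing all but finitely many elements; the cycle structure of a permutation is the non-increasing sequence of lengths of its disjoint cycles. A group is metacyclic if it has a cyclic normal subgroup with cyclic quotient. *)

From mathcomp Require Import all_boot all_fingroup all_solvable.
Set Implicit Arguments. Unset Strict Implicit. Unset Printing Implicit Defensive.

(* Fixed points are omitted,
   so the cycle structure of s : {perm 'I_n} equals the cycle structure of s
   viewed as an element of S_infinity (extended by the identity). *)
Definition cycle_structure (n : nat) (s : {perm 'I_n}) : seq nat :=
  sort geq [seq n' <- [seq #|(C : {set 'I_n})| | C <- enum (porbits s)] | 1 < n'].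

From mathcomp Require Import all_boot all_fingroup all_solvable.
Set Implicit Arguments. Unset Strict Implicit. Unset Printing Implicit Defensive.

(* A permutation whose support has at most M points has order
   dividing M!, since each of its cycles has length at most M.  If g and h
   have cycle structure x, whose entries sum to m, then g, h and g * h^-1 all
   move at most 2m points, so they satisfy y ^+ e = 1 with e := (2m)!.
   The bound then comes from a purely group-theoretic count: in a finite
   metacyclic group D, with cyclic N <| D and D / N cyclic, a subset S of D
   with s ^+ e = 1 and (s * t^-1) ^+ e = 1 for all s, t in S has at most
   e * e elements.  Indeed s |-> (N s, s * r_s^-1), where r_s is a fixed
   representative of S in the coset N s, injects S into the pairs of
   solutions of y ^+ e = 1 in the cyclic groups D / N and N, and a cyclic
   group has at most e such solutions.  Hence b := ((2m)!)^2 works. *)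

Local Open Scope group_scope.

Definition support (T : finType) (s : {perm T}) : {set T} := [set x | s x != x].

Lemma card_bigcup_le (I : Type) (T : finType) (r : seq I) (P : pred I) (F : I -> {set T}) :
  #|\bigcup_(i <- r | P i) F i| <= \sum_(i <- r | P i) #|F i|.
Proof.
apply: (big_ind2 (fun (A : {set T}) k => #|A| <= k)) => //; first by rewrite cards0.
by move=> A1 k1 A2 k2 le1 le2; apply: leq_trans (leq_card_setU _ _) (leq_add le1 le2).
Qed.

Lemma sumn_cycle_structure n (s : {perm 'I_n}) :
  sumn (cycle_structure s) = \sum_(C in porbits s | 1 < #|C|) #|C|.
Proof.
rewrite /cycle_structure (perm_sumn (permEl (perm_sort _ _))).
by rewrite sumnE big_filter big_map big_enum_cond.
Qed.

(* Every moved point lies in a nontrivial orbit, which contains both x and s x. *)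
Lemma support_sub_orbits (T : finType) (s : {perm T}) :
  support s \subset \bigcup_(C in porbits s | 1 < #|C|) C.
Proof.
apply/subsetP => x; rewrite inE => moved.
have x_sx : [set x; s x] \subset porbit s x.
  apply/subsetP => y; rewrite !inE => /orP[]/eqP->; first exact: porbit_id.
  by rewrite -(expg1 s) mem_porbit.
apply: (subsetP (bigcup_sup (porbit s x) _)); last exact: porbit_id.
rewrite imset_f //=; apply: leq_trans (subset_leq_card x_sx).
by rewrite cards2 eq_sym moved.
Qed.

Lemma card_support n (s : {perm 'I_n}) : #|support s| <= sumn (cycle_structure s).
Proof.
rewrite sumn_cycle_structure -big_enum_cond.
apply: leq_trans (card_bigcup_le _ _ _); rewrite big_enum_cond.
exact: subset_leq_card (support_sub_orbits s).
Qed.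

Lemma porbit_sub_support (T : finType) (s : {perm T}) x :
  s x != x -> porbit s x \subset support s.
Proof.
move=> moved; apply/subsetP => _ /porbitP[i ->]; rewrite inE.
apply: contra moved => /eqP fixed; apply/eqP; apply: (@perm_inj _ (s ^+ i)).
by rewrite -permM -expgS expgSr permM fixed.
Qed.

Lemma support_expg_fact (T : finType) (s : {perm T}) M :
  #|support s| <= M -> s ^+ M`! = 1.
Proof.
move=> le_supp; apply/permP => x; rewrite perm1.
have [fixed | moved] := eqVneq (s x) x; first exact: permX_fix.
have le_orb := leq_trans (subset_leq_card (porbit_sub_support moved)) le_supp.
have orb_gt0 : 0 < #|porbit s x| by rewrite lt0n card_porbit_neq0.
have /dvdnP[q ->] : #|porbit s x| %| M`! by rewrite dvdn_fact ?orb_gt0.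
by rewrite mulnC expgM; apply: permX_fix; rewrite permX iter_porbit.
Qed.

Lemma support_mulV (T : finType) (g h : {perm T}) :
  support (g * h^-1) \subset support g :|: support h.
Proof.
apply/subsetP => x; rewrite !inE permM; apply: contraR.
by rewrite negb_or !negbK => /andP[/eqP gx /eqP hx]; rewrite gx -{1}hx permK.
Qed.

Lemma card_Ldiv_cyclic (gT : finGroupType) (G : {group gT}) e :
  cyclic G -> 0 < e -> #|'Ldiv_e(G)| <= e.
Proof.
move=> cycG e_gt0; pose H := Group (group_Ldiv e (cyclic_abelian cycG)).
have sHG : H \subset G by apply: subsetIl.
have expH : exponent H %| e.
  by apply/exponentP => y /setIP[_]; rewrite inE => /eqP.
by rewrite -(exponent_cyclic (cyclicS sHG cycG)) dvdn_leq.
Qed.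

Section MetacyclicCount.

Variables (gT : finGroupType) (D N : {group gT}) (S : {set gT}) (e : nat).
Hypotheses (cycN : cyclic N) (nsND : N <| D) (cycDN : cyclic (D / N)).
Hypotheses (e_gt0 : 0 < e) (sSD : S \subset D).
Hypothesis expS : {in S, forall s, s ^+ e = 1}.
Hypothesis expS_mulV : {in S &, forall s t, (s * t^-1) ^+ e = 1}.

Let rep (u : coset_of N) : gT := odflt 1 [pick t in S | coset N t == u].

Let repP s : s \in S -> rep (coset N s) \in S /\ coset N (rep (coset N s)) = coset N s.
Proof.
move=> Ss; rewrite /rep; case: pickP => [t /andP[St /eqP //]|no_rep].
by move: (no_rep s); rewrite Ss eqxx.
Qed.

Let split_elt s := (coset N s, s * (rep (coset N s))^-1).

Let split_elt_inj : {in S &, injective split_elt}.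
Proof. by move=> s1 s2 _ _ [eq_coset]; rewrite eq_coset => /mulIg. Qed.

Let split_elt_sub :
  split_elt @: S \subset setX 'Ldiv_e(D / N) 'Ldiv_e(N).
Proof.
have nND := normal_norm nsND.
apply/subsetP => _ /imsetP[s Ss ->]; have [Sr coset_r] := repP Ss.
have Ds := subsetP sSD s Ss; have Dr := subsetP sSD _ Sr.
rewrite !inE /= -andbA; apply/and4P; split.
- exact: mem_quotient.
- by rewrite -morphX ?(subsetP nND) // expS // morph1.
- by rewrite -(mem_rcoset N (rep _) s); apply/rcoset_kercosetP; rewrite ?coset_r ?(subsetP nND).
- by rewrite expS_mulV.
Qed.

Lemma card_metacyclic_count : #|S| <= e * e.
Proof.
rewrite -(card_in_imset split_elt_inj).
apply: leq_trans (subset_leq_card split_elt_sub) _.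
by rewrite cardsX leq_mul ?card_Ldiv_cyclic.
Qed.

End MetacyclicCount.

Theorem mainTheorem11 :
  forall (n0 : nat) (g0 : {perm 'I_n0}),
  exists b : nat,
    forall (n : nat) (D : {group {perm 'I_n}}),
      metacyclic D ->
      #|[set g in D | cycle_structure g == cycle_structure g0]| <= b.
Proof.
move=> n0 g0; set m := sumn (cycle_structure g0).
exists ((2 * m)`! * (2 * m)`!)%N => n D /metacyclicP[N [cycN nsND cycDN]].
set S := [set g in _ | _].
have supp_S g : g \in S -> #|support g| <= m.
  by rewrite inE => /andP[_ /eqP cs_g]; rewrite /m -cs_g card_support.
have le_m2m : m <= 2 * m by rewrite mul2n -addnn leq_addl.
apply: card_metacyclic_count cycN nsND cycDN _ _ _ _; rewrite ?fact_gt0 //.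
- by apply/subsetP => g; rewrite inE => /andP[].
- by move=> g Sg; apply: support_expg_fact (leq_trans (supp_S g Sg) le_m2m).
- move=> g h Sg Sh; apply: support_expg_fact.
  apply: leq_trans (subset_leq_card (support_mulV g h)) _.
  by apply: leq_trans (leq_card_setU _ _) _; rewrite mul2n -addnn leq_add ?supp_S.
Qed.
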